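(* Let $k$ be a field, $e \geq 1$, and $M$ a finite-dimensional $k[T]/T^e$-module. Let $\mu = (d_1, \dots, d_e)$ be a tuple of nonnegative integers, $\sigma$ a permutation of $\{1,\dots,e\}$ and $\mu' = (d_{\sigma(1)}, \dots, d_{\sigma(e)})$. Then there exists a PR datum of type $\mu$ for $M$ if and only if there exists a PR datum of type $\mu'$ for $M$.
   Context: A PR datum of type $(d_1,\dots,d_e)$ for $M$ is a filtration $0 = M_0 \subseteq M_1 \subseteq \dots \subseteq M_e = M$ by $k$-vector subspaces such that $T \cdot M_i \subseteq M_{i-1}$ and $\dim_k M_i/M_{i-1} = d_i$ for $1 \leq i \leq e$. *)

From HB Require Import structures.
From mathcomp Require Import all_boot all_order all_algebra all_fingroup.
Set Implicit Arguments. Unset Strict Implicit. Unset Printing Implicit Defensive.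
Import GRing.Theory.
Local Open Scope ring_scope.

(* A finite-dimensional k[T]/T^e-module M is modelled as the k-space of row
   vectors 'rV[k]_n with T acting by right multiplication by a matrix
   T : 'M[k]_n satisfying T ^+ e = 0.  k-subspaces of M are row spaces of
   n x n matrices (mxalgebra).  The tuple (d_1,...,d_e) is d : 'I_e -> nat,
   with d_(i+1) = d i (0-based indexing). *)

Definition PR_datum (k : fieldType) (n e : nat) (T : 'M[k]_n)
    (d : 'I_e -> nat) (Mf : nat -> 'M[k]_n) : Prop :=
  [/\ (Mf 0%N == (0 : 'M[k]_n))%MS,
      (Mf e == 1%:M)%MS &
      forall i : 'I_e,
        [/\ (Mf i <= Mf i.+1)%MS,
            (Mf i.+1 *m T <= Mf i)%MS &
            \rank (Mf i.+1) = (\rank (Mf i) + d i)%N]].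

(* Adjacent transpositions generate the symmetric group, so it suffices to
   swap two consecutive entries x, y of the type.  If A <= B <= C are
   consecutive terms of a PR datum with dim B = dim A + x and
   dim C = dim B + y, a replacement B' for B must satisfy
   A + C T <= B' <= {v in C | v T in A}.  The dimensions of these two bounds
   add up to dim A + dim C, and B lies between them, so dim A + y also lies
   between them: any intermediate subspace of that dimension will do. *)

From HB Require Import structures.
From mathcomp Require Import all_boot all_order all_algebra all_fingroup.
From mathcomp Require Import zify.
Set Implicit Arguments. Unset Strict Implicit. Unset Printing Implicit Defensive.
Local Open Scope ring_scope.

Section Subspaces.
Variables (k : fieldType) (n : nat).

Lemma kermx_cokermx m (A : 'M[k]_(m, n)) : (kermx (cokermx A) :=: A)%MS.
Proof.
have subK p (X : 'M[k]_(p, n)) : (X <= kermx (cokermx A))%MS = (X <= A)%MS.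
  by rewrite sub_kermx submxE.
by apply/eqmxP; rewrite subK submx_refl -subK submx_refl.
Qed.

Lemma mxrank_adds_cokermx m1 m2 (A : 'M[k]_(m1, n)) (X : 'M[k]_(m2, n)) :
  \rank (A + X)%MS = (\rank A + \rank (X *m cokermx A))%N.
Proof.
have := mxrank_mul_ker X (cokermx A).
rewrite (cap_eqmx (eqmx_refl X) (kermx_cokermx A)) capmxC.
have := mxrank_sum_cap A X; lia.
Qed.

Lemma mxrank_adds_mulmx_preimage m1 m2 (A : 'M[k]_(m1, n)) (C : 'M[k]_(m2, n))
    (T : 'M[k]_n) :
  (\rank (A + C *m T)%MS + \rank (C :&: kermx (T *m cokermx A))%MS
   = \rank A + \rank C)%N.
Proof.
have := mxrank_mul_ker C (T *m cokermx A).
have := mxrank_adds_cokermx A (C *m T); rewrite mulmxA; lia.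
Qed.

Lemma exists_submx_rank m1 m2 (L : 'M[k]_(m1, n)) (U : 'M[k]_(m2, n)) r :
  (L <= U)%MS -> (\rank L <= r <= \rank U)%N ->
  exists B : 'M[k]_n, [/\ (L <= B)%MS, (B <= U)%MS & \rank B = r].
Proof.
move=> sLU /andP[leLr]; have [d ->] : exists d, r = (\rank L + d)%N.
  by exists (r - \rank L)%N; lia.
elim: d => [|d IH] leRU; rewrite ?addnS in leRU.
  by exists <<L>>%MS; rewrite !genmxE addn0 submx_refl.
have [B [sLB sBU rkB]] := IH (ltnW leRU).
have /row_subPn[i notUiB] : ~~ (U <= B)%MS.
  by apply: contraTN leRU => /mxrankS; rewrite rkB; lia.
exists (B + row i U)%MS; split.
- exact: submx_trans sLB (addsmxSl _ _).
- by rewrite addsmx_sub sBU row_sub.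
have ltB : (B < B + row i U)%MS.
  rewrite ltmxE addsmxSl; apply: contra notUiB.
  exact: submx_trans (addsmxSr _ _).
have := rank_ltmx ltB; have := (mxrank_adds_leqif B (row i U)).1.
have := rank_leq_row (row i U); lia.
Qed.

Lemma exists_swapped_middle (T : 'M[k]_n) m1 m2 m3 (A : 'M[k]_(m1, n))
    (B : 'M[k]_(m2, n)) (C : 'M[k]_(m3, n)) x y :
  (A <= B)%MS -> (B <= C)%MS -> (B *m T <= A)%MS -> (C *m T <= B)%MS ->
  \rank B = (\rank A + x)%N -> \rank C = (\rank B + y)%N ->
  exists B' : 'M[k]_n, [/\ (A <= B')%MS, (B' <= C)%MS, (B' *m T <= A)%MS,
                          (C *m T <= B')%MS & \rank B' = (\rank A + y)%N].
Proof.
move=> sAB sBC sBTA sCTB rkB rkC.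
set L := (A + C *m T)%MS; set U := (C :&: kermx (T *m cokermx A))%MS.
have subU p (X : 'M[k]_(p, n)) :
    (X <= U)%MS = (X <= C)%MS && (X *m T <= A)%MS.
  by rewrite sub_capmx sub_kermx [(X *m T <= A)%MS]submxE mulmxA.
have sLB : (L <= B)%MS by rewrite addsmx_sub sAB sCTB.
have sBU : (B <= U)%MS by rewrite subU sBC sBTA.
have rk_between : (\rank L <= \rank A + y <= \rank U)%N.
  have := mxrank_adds_mulmx_preimage A C T; rewrite -/L -/U.
  have := mxrankS sLB; have := mxrankS sBU; lia.
have [B' [sLB' sB'U rkB']] :=
  exists_submx_rank (submx_trans sLB sBU) rk_between.
move: sB'U; rewrite subU => /andP[sB'C sB'TA].
exists B'; split=> //.
- exact: submx_trans (addsmxSl _ _) sLB'.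
- exact: submx_trans (addsmxSr _ _) sLB'.
Qed.
End Subspaces.

Lemma perm_adjacent_ind (X : eqType) (P : seq X -> Prop) :
    (forall s1 x y s2, P (s1 ++ x :: y :: s2) -> P (s1 ++ y :: x :: s2)) ->
  forall s s', perm_eq s s' -> P s -> P s'.
Proof.
move=> Pswap.
have Pmove pre x s r : P (pre ++ x :: s ++ r) -> P (pre ++ s ++ x :: r).
  elim: s pre => [|y s IH] pre //= /Pswap.
  by rewrite -cat_rcons => /IH; rewrite cat_rcons.
have PcatCA pre s1 s2 s3 :
    P (pre ++ s1 ++ s2 ++ s3) -> P (pre ++ s2 ++ s1 ++ s3).
  elim: s1 pre => [|x s1 IH] pre //=.
  by rewrite -cat_rcons => /IH; rewrite cat_rcons => /Pmove.
by apply: catCA_perm_ind => s1 s2 s3; exact: PcatCA [::] s1 s2 s3.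
Qed.

Lemma nth_cat_swap (X : Type) (x0 : X) s1 s2 x y j :
  j != size s1 -> j != (size s1).+1 ->
  nth x0 (s1 ++ y :: x :: s2) j = nth x0 (s1 ++ x :: y :: s2) j.
Proof.
move=> ne_j1 ne_j2; rewrite !nth_cat; case: ltnP => // le_s1j.
by case: (j - size s1)%N (subnKC le_s1j) => [|[|m]] //= eq_j; lia.
Qed.

Lemma perm_codom_comp (X : finType) (Y : eqType) (f : X -> Y) (s : {perm X}) :
  perm_eq (codom (f \o s)) (codom f).
Proof.
rewrite !codomE map_comp; apply: perm_map; apply: uniq_perm.
- by rewrite (map_inj_uniq (@perm_inj _ s)) enum_uniq.
- exact: enum_uniq.
- by move=> x; rewrite -codomE perm_onto mem_enum.
Qed.

Section PRSeq.
Variables (k : fieldType) (n : nat) (T : 'M[k]_n).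

Definition PR_seq (ds : seq nat) (Mf : nat -> 'M[k]_n) : Prop :=
  [/\ (Mf 0%N == (0 : 'M[k]_n))%MS, (Mf (size ds) == 1%:M)%MS &
      forall i, (i < size ds)%N ->
        [/\ (Mf i <= Mf i.+1)%MS, (Mf i.+1 *m T <= Mf i)%MS &
            \rank (Mf i.+1) = (\rank (Mf i) + nth 0%N ds i)%N]].

Lemma PR_datum_codom e (d : 'I_e -> nat) Mf :
  PR_datum T d Mf <-> PR_seq (codom d) Mf.
Proof.
rewrite /PR_seq size_codom card_ord codomE.
split=> -[Mf0 Mfe Mfstep]; split=> //.
  move=> j lt_je; have := Mfstep (Ordinal lt_je).
  rewrite (nth_map (Ordinal lt_je)) ?size_enum_ord //.
  by rewrite (nth_ord_enum _ (Ordinal lt_je)).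
move=> i; have := Mfstep i (ltn_ord i).
by rewrite (nth_map i) ?size_enum_ord ?nth_ord_enum.
Qed.

Lemma PR_seq_swap s1 x y s2 :
  (exists Mf, PR_seq (s1 ++ x :: y :: s2) Mf) ->
  exists Mf, PR_seq (s1 ++ y :: x :: s2) Mf.
Proof.
case=> Mf [Mf0 Mfe Mfstep]; set i := size s1.
have size_swap : size (s1 ++ y :: x :: s2) = size (s1 ++ x :: y :: s2).
  by rewrite !size_cat.
have lt_i1 : (i.+1 < size (s1 ++ x :: y :: s2))%N by rewrite size_cat /=; lia.
have nth_i a b : nth 0%N (s1 ++ a :: b :: s2) i = a.
  by rewrite nth_cat ltnn subnn.
have nth_i1 a b : nth 0%N (s1 ++ a :: b :: s2) i.+1 = b.
  by rewrite nth_cat ltnNge leqnSn subSnn.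
have [sAB sBTA rkB] := Mfstep i (ltnW lt_i1).
have [sBC sCTB rkC] := Mfstep i.+1 lt_i1.
rewrite nth_i in rkB; rewrite nth_i1 in rkC.
have [B' [sAB' sB'C sB'TA sCTB' rkB']] :=
  exists_swapped_middle sAB sBC sBTA sCTB rkB rkC.
exists (fun j => if j == i.+1 then B' else Mf j); split=> //.
  by rewrite size_swap ifN_eq // size_cat /=; lia.
move=> j; rewrite size_swap => lt_j.
have [->|ne_ji] := eqVneq j i.
  by rewrite (ltn_eqF (ltnSn i)) nth_i eqxx.
have [->|ne_ji1] := eqVneq j i.+1.
  rewrite (gtn_eqF (ltnSn i.+1)) nth_i1; split=> //; lia.
rewrite eqSS !ifN_eq // nth_cat_swap //; exact: Mfstep.
Qed.

Lemma PR_seq_perm ds ds' : perm_eq ds ds' ->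
  (exists Mf, PR_seq ds Mf) -> exists Mf, PR_seq ds' Mf.
Proof.
exact: (perm_adjacent_ind (P := fun ds => exists Mf, PR_seq ds Mf) PR_seq_swap).
Qed.

Lemma PR_datum_perm e (d1 d2 : 'I_e -> nat) : perm_eq (codom d1) (codom d2) ->
  (exists Mf, PR_datum T d1 Mf) -> exists Mf, PR_datum T d2 Mf.
Proof.
move=> perm_d [Mf /PR_datum_codom PRMf].
have [Mf' /PR_datum_codom] := PR_seq_perm perm_d (ex_intro _ Mf PRMf).
by exists Mf'.
Qed.

End PRSeq.

Theorem mainTheorem4 (k : fieldType) (e : nat) (he : (1 <= e)%N)
    (n : nat) (T : 'M[k]_n) (hT : T ^+ e = 0)
    (d : 'I_e -> nat) (s : 'S_e) :
  (exists Mf : nat -> 'M[k]_n, PR_datum T d Mf) <->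
  (exists Mf : nat -> 'M[k]_n, PR_datum T (fun i => d (s i)) Mf).
Proof.
split; apply: PR_datum_perm; last exact: perm_codom_comp.
by rewrite perm_sym; exact: perm_codom_comp.
Qed.
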